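(* Let $\bar j\in\{1,\dots,\bar d\}$ and $z\in\mathbb R^{\bar d}$ with $\mathrm{supp}(z)\subset\{1,\dots,\bar j-1\}$. Then: (1) if $\bar j=1$, then $\mathrm{supp}(z)=\emptyset$, $z=0$, and $\mathrm{supp}(\nabla f_i(z))\subset\{1\}$ for every $i\in[1,m]$; (2) if $\bar j$ is even, then $\mathrm{supp}(\nabla f_i(z))\subset\{1,\dots,\bar j\}$ for $i\in[1,\frac m3]$ and $\mathrm{supp}(\nabla f_i(z))\subset\{1,\dots,\bar j-1\}$ for $i\in[\frac m3+1,m]$; (3) if $\bar j$ is odd and $\bar j\ne1$, then $\mathrm{supp}(\nabla f_i(z))\subset\{1,\dots,\bar j-1\}$ for $i\in[1,\frac{2m}3]$ and $\mathrm{supp}(\nabla f_i(z))\subset\{1,\dots,\bar j\}$ for $i\in[\frac{2m}3+1,m]$.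
   Context: $\mathrm{supp}(z)=\{j:[z]_j\ne0\}$, $[z]_j$ the $j$-th coordinate. Fix $\epsilon\in(0,1)$, $L_f>0$, integers $m_1\ge2$, $m_2\ge1$ with $m_1m_2$ even, $m=3m_1m_2$, an odd integer $\bar d\ge5$. $\Psi(u)=0$ ($u\le0$), $1-e^{-u^2}$ ($u>0$); $\Phi(v)=4\arctan v+2\pi$. For $z\in\mathbb R^{\bar d}$: $\varphi(z,1)=-\Psi(1)\Phi([z]_1)$, $\varphi(z,j)=\Psi(-[z]_{j-1})\Phi(-[z]_j)-\Psi([z]_{j-1})\Phi([z]_j)$ ($2\le j\le\bar d$); $h_i(z)=\varphi(z,1)+3\sum_{j=1}^{\lfloor\bar d/2\rfloor}\varphi(z,2j)$ for $1\le i\le m/3$, $h_i(z)=\varphi(z,1)$ for $m/3+1\le i\le 2m/3$, $h_i(z)=\varphi(z,1)+3\sum_{j=1}^{\lfloor\bar d/2\rfloor}\varphi(z,2j+1)$ for $2m/3+1\le i\le m$. $f_i(z)=\frac{300\pi\epsilon^2}{mL_f}h_i(\frac{\sqrt mL_fz}{150\pi\epsilon})$. *)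

From Stdlib Require Import Reals Lra Lia Arith.
From Coquelicot Require Import Coquelicot.
Open Scope R_scope.

(* Vectors z in R^dbar are represented as z : nat -> R, coordinate [z]_k = z k
   for 1 <= k <= dbar (coordinates outside 1..dbar are never used). *)

Definition Psi (u : R) : R := if Rle_dec u 0 then 0 else 1 - exp (- (u ^ 2)).
Definition Phi (v : R) : R := 4 * atan v + 2 * PI.

Definition varphi (z : nat -> R) (j : nat) : R :=
  match j with
  | 1%nat => - Psi 1 * Phi (z 1%nat)
  | _ => Psi (- z (j - 1)%nat) * Phi (- z j) - Psi (z (j - 1)%nat) * Phi (z j)
  end.

Fixpoint sum1 (n : nat) (g : nat -> R) : R :=
  match n with
  | O => 0
  | S k => sum1 k g + g (S k)
  end.

Definition hfun (dbar m i : nat) (z : nat -> R) : R :=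
  if Nat.leb i (m / 3) then
    varphi z 1 + 3 * sum1 (Nat.div2 dbar) (fun j => varphi z (2 * j))
  else if Nat.leb i (2 * m / 3) then varphi z 1
  else varphi z 1 + 3 * sum1 (Nat.div2 dbar) (fun j => varphi z (2 * j + 1)).

Definition ffun (dbar m : nat) (eps Lf : R) (i : nat) (z : nat -> R) : R :=
  300 * PI * eps ^ 2 / (INR m * Lf) *
  hfun dbar m i (fun k => sqrt (INR m) * Lf * z k / (150 * PI * eps)).

Definition shift (z : nat -> R) (j : nat) (t : R) : nat -> R :=
  fun k => if Nat.eqb k j then z k + t else z k.

(* supp(grad F(z)) subset S, for F : R^dbar -> R:
   all partial derivatives of F at z exist, and [grad F(z)]_j = 0 for j in 1..dbar, j not in S *)
Definition grad_supp_sub (dbar : nat) (F : (nat -> R) -> R) (z : nat -> R)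
  (S : nat -> Prop) : Prop :=
  (forall j, (1 <= j <= dbar)%nat -> ex_derive (fun t => F (shift z j t)) 0) /\
  (forall j, (1 <= j <= dbar)%nat -> ~ S j -> is_derive (fun t => F (shift z j t)) 0 0).

From Stdlib Require Import Reals Arith Lra Lia FunctionalExtensionality.
From Coquelicot Require Import Coquelicot.
Open Scope R_scope.

(** The terms [varphi z k] with [k >= 2] read only [z (k-1)] and [z k], and since
    [|Psi u| <= u^2] while [|Phi| <= 4 PI], one has [|varphi z k| <= 8 PI (z (k-1))^2]:
    such a term has zero partial derivatives at every [z] with [z (k-1) = 0].
    If [z] vanishes from [jbar] on, a coordinate [j >= jbar] enters [h_i] only through
    the terms [k = j] and [k = j + 1]; both are flat at [z] except the term [k = j = jbar].
    Hence every partial [d_j h_i (z)] with [j > jbar] vanishes, and [d_jbar h_i (z)]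
    vanishes unless [h_i] contains [varphi _ jbar], i.e. unless [jbar] is even and
    [i <= m/3], or [jbar] is odd and [i > 2m/3].  Finally [f_i z = C h_i (a z)], and
    [z |-> a z] preserves supports for every [a] (also for the junk value of division
    by zero). *)

Lemma is_derive_0_of_quadratic_bound (g : R -> R) (x K : R) :
  (forall t, Rabs (g t) <= K * (t - x) ^ 2) -> is_derive g x 0.
Proof.
  intros Hg. apply is_derive_Reals. intros e He.
  assert (Hgx : g x = 0).
  { specialize (Hg x). rewrite Rminus_diag in Hg.
    pose proof (Rabs_pos (g x)). apply Rabs_eq_0. nra. }
  assert (HK : 0 < Rabs K + 1) by (pose proof (Rabs_pos K); lra).
  exists (mkposreal (e / (Rabs K + 1)) (Rdiv_lt_0_compat _ _ He HK)).
  intros h Hh Hhe; simpl in Hhe.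
  specialize (Hg (x + h)). replace (x + h - x) with h in Hg by ring.
  rewrite Hgx, !Rminus_0_r, Rabs_div by exact Hh.
  assert (Hh0 : 0 < Rabs h) by (apply Rabs_pos_lt, Hh).
  apply Rlt_div_l; [exact Hh0|].
  assert (Hsq : h ^ 2 = Rabs h * Rabs h) by (rewrite <- Rabs_mult, Rabs_right; nra).
  assert (HKe : (Rabs K + 1) * Rabs h < e) by (apply Rlt_div_r in Hhe; lra).
  pose proof (Rle_abs K).
  rewrite Hsq in Hg. nra.
Qed.

Lemma Psi_abs_bound (u : R) : Rabs (Psi u) <= u ^ 2.
Proof.
  unfold Psi; destruct Rle_dec as [Hu|Hu].
  - rewrite Rabs_R0; nra.
  - assert (exp (- u ^ 2) < 1) by (rewrite <- exp_0; apply exp_increasing; nra).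
    pose proof (exp_ineq1_le (- u ^ 2)).
    rewrite Rabs_right; lra.
Qed.

Lemma Phi_abs_bound (v : R) : Rabs (Phi v) <= 4 * PI.
Proof. unfold Phi; pose proof (atan_bound v); apply Rabs_le; lra. Qed.

Lemma ex_derive_Psi (x : R) : ex_derive Psi x.
Proof.
  destruct (Rtotal_order x 0) as [Hx|[->|Hx]].
  - exists 0. apply is_derive_ext_loc with (fun _ => 0); [|auto_derive; reflexivity].
    exists (mkposreal (- x) ltac:(lra)). intros y Hy.
    change (Rabs (y - x) < - x) in Hy; apply Rabs_def2 in Hy. unfold Psi; destruct Rle_dec; lra.
  - exists 0. apply (is_derive_0_of_quadratic_bound _ _ 1). intros t.
    rewrite Rminus_0_r, Rmult_1_l. apply Psi_abs_bound.
  - eexists. apply is_derive_ext_loc with (fun t => 1 - exp (- t ^ 2)).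
    + exists (mkposreal x Hx). intros y Hy.
      change (Rabs (y - x) < x) in Hy; apply Rabs_def2 in Hy. unfold Psi; destruct Rle_dec; lra.
    + auto_derive; auto.
Qed.

Lemma ex_derive_Phi (x : R) : ex_derive Phi x.
Proof. unfold Phi; auto_derive; auto. Qed.

Lemma varphi_ne1 (w : nat -> R) (k : nat) : k <> 1%nat ->
  varphi w k = Psi (- w (k - 1)%nat) * Phi (- w k) - Psi (w (k - 1)%nat) * Phi (w k).
Proof. intros; destruct k as [|[|k]]; [reflexivity|lia|reflexivity]. Qed.

Lemma varphi_abs_bound (w : nat -> R) (k : nat) : k <> 1%nat ->
  Rabs (varphi w k) <= 8 * PI * w (k - 1)%nat ^ 2.
Proof.
  intros Hk; rewrite varphi_ne1 by exact Hk.
  set (u := w (k - 1)%nat).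
  pose proof (Psi_abs_bound u); pose proof (Psi_abs_bound (- u)).
  pose proof (Phi_abs_bound (w k)); pose proof (Phi_abs_bound (- w k)).
  pose proof (Rabs_pos (Psi u)); pose proof (Rabs_pos (Psi (- u))).
  unfold Rminus; eapply Rle_trans; [apply Rabs_triang|].
  rewrite Rabs_Ropp, !Rabs_mult.
  replace ((- u) ^ 2) with (u ^ 2) in * by ring.
  assert (Rabs (Psi u) * Rabs (Phi (w k)) <= u ^ 2 * (4 * PI))
    by (apply Rmult_le_compat; auto using Rabs_pos).
  assert (Rabs (Psi (- u)) * Rabs (Phi (- w k)) <= u ^ 2 * (4 * PI))
    by (apply Rmult_le_compat; auto using Rabs_pos).
  lra.
Qed.

Lemma shift_other (w : nat -> R) (j n : nat) (t : R) : n <> j -> shift w j t n = w n.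
Proof. intros Hn; unfold shift; destruct (Nat.eqb_spec n j); [contradiction|reflexivity]. Qed.

Lemma varphi_shift_irrelevant (w : nat -> R) (j k : nat) (t : R) :
  j <> k -> j <> (k - 1)%nat -> varphi (shift w j t) k = varphi w k.
Proof.
  intros Hk Hk1. destruct (Nat.eq_dec k 1) as [->|Hk1'].
  - cbn [varphi]. rewrite shift_other by auto. reflexivity.
  - rewrite !varphi_ne1, !shift_other by auto. reflexivity.
Qed.

Lemma is_derive_varphi_shift_flat (w : nat -> R) (j k : nat) :
  k <> 1%nat -> w (k - 1)%nat = 0 -> is_derive (fun t => varphi (shift w j t) k) 0 0.
Proof.
  intros Hk Hw. apply (is_derive_0_of_quadratic_bound _ _ (8 * PI)). intros t.
  eapply Rle_trans; [apply varphi_abs_bound, Hk|].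
  pose proof PI_RGT_0. rewrite Rminus_0_r.
  apply Rmult_le_compat_l; [lra|].
  unfold shift; destruct (Nat.eqb _ _); rewrite Hw; nra.
Qed.

Lemma is_derive_varphi_shift_0 (w : nat -> R) (j k : nat) :
  (j = k \/ j = (k - 1)%nat -> k <> 1%nat /\ w (k - 1)%nat = 0) ->
  is_derive (fun t => varphi (shift w j t) k) 0 0.
Proof.
  intros H.
  destruct (Nat.eq_dec j k) as [E|Ek]; [|destruct (Nat.eq_dec j (k - 1)) as [E|Ek1]].
  - destruct (H (or_introl E)); apply is_derive_varphi_shift_flat; auto.
  - destruct (H (or_intror E)); apply is_derive_varphi_shift_flat; auto.
  - apply is_derive_ext with (fun _ => varphi w k); [|auto_derive; reflexivity].
    intros t; symmetry; apply varphi_shift_irrelevant; auto.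
Qed.

Lemma ex_derive_varphi_shift (w : nat -> R) (j k : nat) :
  ex_derive (fun t => varphi (shift w j t) k) 0.
Proof.
  destruct (Nat.eq_dec k 1) as [->|Hk].
  - cbn [varphi]; unfold shift.
    destruct (Nat.eqb 1 j); auto_derive; repeat split; apply ex_derive_Phi.
  - eapply ex_derive_ext; [intros t; symmetry; apply varphi_ne1, Hk|]. unfold shift.
    destruct (Nat.eqb (k - 1) j), (Nat.eqb k j); auto_derive;
      repeat split; auto using ex_derive_Psi, ex_derive_Phi.
Qed.

Lemma ex_derive_sum1 (n : nat) (g : nat -> R -> R) (x : R) :
  (forall k, ex_derive (g k) x) -> ex_derive (fun t => sum1 n (fun k => g k t)) x.
Proof.
  intros Hg; induction n as [|n IH]; simpl.
  - apply ex_derive_const.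
  - apply (ex_derive_plus (fun t => sum1 n (fun k => g k t))); auto.
Qed.

Lemma is_derive_sum1_0 (n : nat) (g : nat -> R -> R) (x : R) :
  (forall k, (1 <= k <= n)%nat -> is_derive (g k) x 0) ->
  is_derive (fun t => sum1 n (fun k => g k t)) x 0.
Proof.
  intros Hg; induction n as [|n IH]; simpl.
  - apply (is_derive_const 0).
  - rewrite <- (Rplus_0_r 0).
    apply (is_derive_plus (fun t => sum1 n (fun k => g k t))).
    + apply IH; intros k Hk; apply Hg; lia.
    + apply Hg; lia.
Qed.

Lemma ex_derive_add_scal_sum1 (f : R -> R) (g : nat -> R -> R) (c : R) (n : nat) (x : R) :
  ex_derive f x -> (forall k, ex_derive (g k) x) ->
  ex_derive (fun t => f t + c * sum1 n (fun k => g k t)) x.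
Proof.
  intros Hf Hg. apply (ex_derive_plus f); auto.
  apply (ex_derive_scal (fun t => sum1 n (fun k => g k t))), ex_derive_sum1, Hg.
Qed.

Lemma is_derive_add_scal_sum1_0 (f : R -> R) (g : nat -> R -> R) (c : R) (n : nat) (x : R) :
  is_derive f x 0 -> (forall k, (1 <= k <= n)%nat -> is_derive (g k) x 0) ->
  is_derive (fun t => f t + c * sum1 n (fun k => g k t)) x 0.
Proof.
  intros Hf Hg. replace 0 with (0 + c * 0) by ring.
  apply (is_derive_plus f); auto.
  apply (is_derive_scal (fun t => sum1 n (fun k => g k t))), is_derive_sum1_0, Hg.
Qed.

Lemma ex_derive_hfun_shift (dbar m i : nat) (w : nat -> R) (j : nat) :
  ex_derive (fun t => hfun dbar m i (shift w j t)) 0.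
Proof.
  unfold hfun; destruct (Nat.leb i (m / 3)); [|destruct (Nat.leb i (2 * m / 3))].
  - apply ex_derive_add_scal_sum1; intros; apply ex_derive_varphi_shift.
  - apply ex_derive_varphi_shift.
  - apply ex_derive_add_scal_sum1; intros; apply ex_derive_varphi_shift.
Qed.

Lemma is_derive_hfun_shift_0 (dbar m i : nat) (w : nat -> R) (j : nat) :
  is_derive (fun t => varphi (shift w j t) 1) 0 0 ->
  ((i <= m / 3)%nat -> forall k, (1 <= k <= Nat.div2 dbar)%nat ->
     is_derive (fun t => varphi (shift w j t) (2 * k)) 0 0) ->
  ((2 * m / 3 < i)%nat -> forall k, (1 <= k <= Nat.div2 dbar)%nat ->
     is_derive (fun t => varphi (shift w j t) (2 * k + 1)) 0 0) ->
  is_derive (fun t => hfun dbar m i (shift w j t)) 0 0.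
Proof.
  intros H1 Heven Hodd. unfold hfun.
  destruct (Nat.leb_spec i (m / 3)); [|destruct (Nat.leb_spec i (2 * m / 3))].
  - apply is_derive_add_scal_sum1_0; auto.
  - exact H1.
  - apply is_derive_add_scal_sum1_0; auto.
Qed.

Lemma grad_supp_sub_hfun (dbar m i : nat) (w : nat -> R) (jbar : nat) (S : nat -> Prop) :
  (forall n, (1 <= n <= dbar)%nat -> (jbar <= n)%nat -> w n = 0) ->
  (forall j, (1 <= j <= dbar)%nat -> ~ S j ->
     (2 <= j)%nat /\ (jbar <= j)%nat /\
     (j = jbar -> ((i <= m / 3)%nat -> Nat.Odd jbar) /\ ((2 * m / 3 < i)%nat -> Nat.Even jbar))) ->
  grad_supp_sub dbar (hfun dbar m i) w S.
Proof.
  intros Hw HS. split; [intros; apply ex_derive_hfun_shift|].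
  intros j Hj HnS. destruct (HS j Hj HnS) as (Hj2 & Hjbar & Hjeq).
  assert (Hdbar : (2 * Nat.div2 dbar <= dbar)%nat) by (rewrite (Nat.div2_odd dbar) at 2; lia).
  apply is_derive_hfun_shift_0.
  - apply is_derive_varphi_shift_0; intros [E|E]; lia.
  - intros Hi k Hk. apply is_derive_varphi_shift_0; intros Ejk.
    split; [lia|]. apply Hw; [lia|].
    destruct (Nat.eq_dec j jbar) as [E|E]; [|lia].
    destruct (proj1 (Hjeq E) Hi) as [p Hp]; lia.
  - intros Hi k Hk. apply is_derive_varphi_shift_0; intros Ejk.
    split; [lia|]. apply Hw; [lia|].
    destruct (Nat.eq_dec j jbar) as [E|E]; [|lia].
    destruct (proj2 (Hjeq E) Hi) as [p Hp]; lia.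
Qed.

Lemma is_derive_scal_comp_linear (g : R -> R) (C a dg : R) :
  is_derive g 0 dg -> is_derive (fun t => C * g (a * t)) 0 (C * (a * dg)).
Proof.
  intros Hg. apply (is_derive_scal (fun t => g (a * t))).
  apply (is_derive_comp g (fun t => a * t)).
  - rewrite Rmult_0_r; exact Hg.
  - auto_derive; [exact I | ring].
Qed.

Lemma shift_scale (w : nat -> R) (a c : R) (j : nat) (t : R) :
  (fun k => a * shift w j t k / c) = shift (fun k => a * w k / c) j (a / c * t).
Proof.
  apply functional_extensionality; intros k; unfold shift.
  destruct (Nat.eqb k j); [unfold Rdiv; ring | reflexivity].
Qed.

Lemma ffun_shift (dbar m : nat) (eps Lf : R) (i : nat) (z : nat -> R) (j : nat) (t : R) :
  ffun dbar m eps Lf i (shift z j t) =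
  300 * PI * eps ^ 2 / (INR m * Lf) *
  hfun dbar m i (shift (fun k => sqrt (INR m) * Lf * z k / (150 * PI * eps)) j
                       (sqrt (INR m) * Lf / (150 * PI * eps) * t)).
Proof. unfold ffun; rewrite shift_scale; reflexivity. Qed.

Lemma grad_supp_sub_ffun (dbar m : nat) (eps Lf : R) (i : nat) (z : nat -> R) (S : nat -> Prop) :
  grad_supp_sub dbar (hfun dbar m i) (fun k => sqrt (INR m) * Lf * z k / (150 * PI * eps)) S ->
  grad_supp_sub dbar (ffun dbar m eps Lf i) z S.
Proof.
  set (C := 300 * PI * eps ^ 2 / (INR m * Lf)).
  set (a := sqrt (INR m) * Lf / (150 * PI * eps)).
  set (w := fun k => sqrt (INR m) * Lf * z k / (150 * PI * eps)).
  assert (Hf : forall j t, ffun dbar m eps Lf i (shift z j t) = C * hfun dbar m i (shift w j (a * t)))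
    by (intros; unfold C, a, w; apply ffun_shift).
  intros [Hex H0]. split.
  - intros j Hj. destruct (Hex j Hj) as [dh Hdh].
    exists (C * (a * dh)).
    apply (is_derive_ext (fun t => C * hfun dbar m i (shift w j (a * t)))).
    { intros t; exact (eq_sym (Hf j t)). }
    apply (is_derive_scal_comp_linear (fun u => hfun dbar m i (shift w j u))), Hdh.
  - intros j Hj HS.
    apply (is_derive_ext (fun t => C * hfun dbar m i (shift w j (a * t)))).
    { intros t; exact (eq_sym (Hf j t)). }
    replace 0 with (C * (a * 0)) at 2 by ring.
    apply (is_derive_scal_comp_linear (fun u => hfun dbar m i (shift w j u))), H0; assumption.
Qed.

Theorem lemma7 (eps Lf : R) (m1 m2 dbar : nat)
  (heps : 0 < eps < 1) (hLf : 0 < Lf)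
  (hm1 : (2 <= m1)%nat) (hm2 : (1 <= m2)%nat) (hm : Nat.Even (m1 * m2))
  (hd : (5 <= dbar)%nat) (hdodd : Nat.Odd dbar)
  (jbar : nat) (hj : (1 <= jbar <= dbar)%nat) (z : nat -> R)
  (hz : forall k, (1 <= k <= dbar)%nat -> z k <> 0 -> (1 <= k <= jbar - 1)%nat) :
  let m := (3 * m1 * m2)%nat in
  (jbar = 1%nat ->
     (forall k, (1 <= k <= dbar)%nat -> ~ (z k <> 0)) /\
     (forall k, (1 <= k <= dbar)%nat -> z k = 0) /\
     (forall i, (1 <= i <= m)%nat ->
        grad_supp_sub dbar (ffun dbar m eps Lf i) z (fun k => k = 1%nat))) /\
  (Nat.Even jbar ->
     (forall i, (1 <= i <= m / 3)%nat ->
        grad_supp_sub dbar (ffun dbar m eps Lf i) z (fun k => (1 <= k <= jbar)%nat)) /\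
     (forall i, (m / 3 + 1 <= i <= m)%nat ->
        grad_supp_sub dbar (ffun dbar m eps Lf i) z (fun k => (1 <= k <= jbar - 1)%nat))) /\
  (Nat.Odd jbar -> jbar <> 1%nat ->
     (forall i, (1 <= i <= 2 * m / 3)%nat ->
        grad_supp_sub dbar (ffun dbar m eps Lf i) z (fun k => (1 <= k <= jbar - 1)%nat)) /\
     (forall i, (2 * m / 3 + 1 <= i <= m)%nat ->
        grad_supp_sub dbar (ffun dbar m eps Lf i) z (fun k => (1 <= k <= jbar)%nat))).
Proof.
  intros m.
  assert (Hz0 : forall n, (1 <= n <= dbar)%nat -> (jbar <= n)%nat -> z n = 0).
  { intros n Hn Hjn. destruct (Req_dec (z n) 0) as [E|E]; [exact E|].
    specialize (hz n Hn E); lia. }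
  assert (Hw0 : forall n, (1 <= n <= dbar)%nat -> (jbar <= n)%nat ->
    sqrt (INR m) * Lf * z n / (150 * PI * eps) = 0).
  { intros n Hn Hjn; rewrite (Hz0 n Hn Hjn); unfold Rdiv; ring. }
  split; [|split].
  - intros ->. split; [|split].
    + intros k Hk E; specialize (hz k Hk E); lia.
    + intros k Hk; apply Hz0; lia.
    + intros i _; apply grad_supp_sub_ffun, (grad_supp_sub_hfun _ _ _ _ _ _ Hw0).
      intros j Hj HS.
      split; [lia|split; [lia|intros; exfalso; lia]].
  - intros Hev; pose proof Hev as [p Hp]; split.
    + intros i _; apply grad_supp_sub_ffun, (grad_supp_sub_hfun _ _ _ _ _ _ Hw0).
      intros j Hj HS.
      split; [lia|split; [lia|intros; exfalso; lia]].
    + intros i Hi; apply grad_supp_sub_ffun, (grad_supp_sub_hfun _ _ _ _ _ _ Hw0).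
      intros j Hj HS.
      split; [lia|split; [lia|split; [lia|auto]]].
  - intros Hodd Hj1; pose proof Hodd as [p Hp]; split.
    + intros i Hi; apply grad_supp_sub_ffun, (grad_supp_sub_hfun _ _ _ _ _ _ Hw0).
      intros j Hj HS.
      split; [lia|split; [lia|split; [auto|lia]]].
    + intros i _; apply grad_supp_sub_ffun, (grad_supp_sub_hfun _ _ _ _ _ _ Hw0).
      intros j Hj HS.
      split; [lia|split; [lia|intros; exfalso; lia]].
Qed.
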